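(* Let $w$ be the fixed point of the morphism $\psi$ on $\{0,1\}^*$ given by $\psi(1)=100$, $\psi(0)=10$ (i.e. $w=\lim_{k\to\infty}\psi^k(1)=1001010100101\cdots$), written $w=w_1w_2w_3\cdots$. Then for all $n\ge1$, $$w_n=\mathrm{St}\big(\sqrt2-1,\;1-\tfrac12\sqrt2\big)_n=\Big\lfloor (n+1)(\sqrt2-1)+1-\tfrac12\sqrt2\Big\rfloor-\Big\lfloor n(\sqrt2-1)+1-\tfrac12\sqrt2\Big\rfloor.$$
   Context: $\mathrm{St}(\alpha,\beta)_n=\lfloor (n+1)\alpha+\beta\rfloor-\lfloor n\alpha+\beta\rfloor$ for $n=1,2,\dots$; the letters of $w$ are indexed starting from $1$. *)

From Stdlib Require Import Reals List ZArith.
Import ListNotations.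
Open Scope R_scope.

(* floor x : the largest integer <= x.  Stdlib's Int_part x = up x - 1 is
   exactly the floor (up x is the unique integer with x < up x <= x + 1). *)
Definition floor (x : R) : Z := Int_part x.

Definition St (alpha beta : R) (n : nat) : Z :=
  (floor (INR (S n) * alpha + beta) - floor (INR n * alpha + beta))%Z.

Definition psi_letter (a : nat) : list nat :=
  match a with
  | 0 => [1; 0]%nat
  | _ => [1; 0; 0]%nat
  end.

Definition psi (u : list nat) : list nat := flat_map psi_letter u.

Definition psi_iter (k : nat) : list nat := Nat.iter k psi [1%nat].

(* The fixed point w = lim psi^k(1), indexed from 1.  Since psi^k(1) is a prefix
   of psi^(k+1)(1) and |psi^k(1)| >= k+1, the letter w_n (n >= 1) is the
   (n-1)-th (0-based) letter of psi^n(1). *)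
Definition w (n : nat) : nat := nth (n - 1)%nat (psi_iter n) 0%nat.

From Stdlib Require Import Reals List Znat Lra Lia Psatz.
Open Scope R_scope.

(* Write f(n) = floor(n alpha + beta), so that the Sturmian letter is
   s_n = f(n+1) - f(n).  Since alpha^2 = 1 - 2 alpha and beta = (1 - alpha)/2,
   the point (2j + 1 + f(j+1)) alpha + beta lies exactly d alpha below j + 1,
   where d is the fractional part of (j+1) alpha + beta.  Reading off the next
   two or three floors shows that the letters following position 2j + f(j+1)
   spell psi(s_(j+1)).  Hence psi maps the prefix of s of length L onto its
   prefix of length 2L + f(L+1), and every psi^k(1) is a prefix of s. *)

Lemma floor_bounds x : IZR (floor x) <= x < IZR (floor x) + 1.
Proof. unfold floor. destruct (base_Int_part x). lra. Qed.

Lemma floor_eq x N : IZR N <= x < IZR N + 1 -> floor x = N.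
Proof.
  intros [H1 H2]. destruct (floor_bounds x) as [H3 H4].
  assert (floor x - N < 1)%Z by (apply lt_IZR; rewrite minus_IZR; lra).
  assert (N - floor x < 1)%Z by (apply lt_IZR; rewrite minus_IZR; lra).
  lia.
Qed.

Lemma floor_nonneg x : 0 <= x -> (0 <= floor x)%Z.
Proof.
  intro Hx. destruct (floor_bounds x).
  assert (-1 < floor x)%Z by (apply lt_IZR; lra). lia.
Qed.

Lemma floor_add_small x a : 0 <= a < 1 ->
  floor (x + a) = floor x \/ floor (x + a) = (floor x + 1)%Z.
Proof.
  intro Ha. destruct (floor_bounds x), (floor_bounds (x + a)).
  assert (floor (x + a) - floor x < 2)%Z by (apply lt_IZR; rewrite minus_IZR; lra).
  assert (-1 < floor (x + a) - floor x)%Z by (apply lt_IZR; rewrite minus_IZR; lra).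
  lia.
Qed.

Lemma St_01 alpha beta n : 0 <= alpha < 1 ->
  St alpha beta n = 0%Z \/ St alpha beta n = 1%Z.
Proof.
  intro Ha. unfold St.
  replace (INR (S n) * alpha + beta) with (INR n * alpha + beta + alpha)
    by (rewrite S_INR; ring).
  destruct (floor_add_small (INR n * alpha + beta) alpha Ha) as [-> | ->]; lia.
Qed.

Definition frac x := x - IZR (floor x).

Lemma frac_bounds x : (forall N, x <> IZR N) -> 0 < frac x < 1.
Proof.
  intro Hx. unfold frac. destruct (floor_bounds x) as [H1 H2].
  destruct (Rle_lt_or_eq_dec _ _ H1) as [H | H].
  - lra.
  - now destruct (Hx (floor x)).
Qed.

Lemma sqrt2_sqr : sqrt 2 * sqrt 2 = 2.
Proof. apply sqrt_sqrt; lra. Qed.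

Lemma sqrt2_mul_odd_not_integer (z p : Z) : sqrt 2 * IZR (2 * z + 1) <> IZR p.
Proof.
  intro H.
  assert (Hsq : IZR (2 * ((2 * z + 1) * (2 * z + 1))) = IZR (p * p)).
  { rewrite !mult_IZR, <- H. set (q := IZR (2 * z + 1)).
    transitivity (sqrt 2 * sqrt 2 * (q * q)); [rewrite sqrt2_sqr |]; ring. }
  apply eq_IZR in Hsq.
  destruct (Z.Even_or_Odd p) as [[k ->] | [k ->]]; nia.
Qed.

Definition alpha := sqrt 2 - 1.
Definition beta := 1 - / 2 * sqrt 2.

Lemma alpha_sqr : alpha * alpha = 1 - 2 * alpha.
Proof. unfold alpha. pose proof sqrt2_sqr. nra. Qed.

Lemma beta_alpha : beta = (1 - alpha) / 2.
Proof. unfold alpha, beta. field. Qed.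

Lemma alpha_bounds : 1 / 3 < alpha < 1 / 2.
Proof. unfold alpha. pose proof sqrt2_sqr. pose proof (sqrt_pos 2). nra. Qed.

Definition mfloor (n : nat) : Z := floor (INR n * alpha + beta).

Lemma mfloor_not_integer n N : INR n * alpha + beta <> IZR N.
Proof.
  intro H. apply (sqrt2_mul_odd_not_integer (Z.of_nat n - 1) (2 * (N + Z.of_nat n - 1))).
  repeat rewrite ?mult_IZR, ?plus_IZR, ?minus_IZR.
  rewrite <- INR_IZR_INZ, <- H.
  unfold alpha, beta. field.
Qed.

Lemma mfloor_nonneg n : (0 <= mfloor n)%Z.
Proof.
  apply floor_nonneg. rewrite beta_alpha.
  pose proof (pos_INR n). pose proof alpha_bounds. nra.
Qed.

Lemma INR_to_nat_mfloor n : INR (Z.to_nat (mfloor n)) = IZR (mfloor n).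
Proof. rewrite INR_IZR_INZ, Z2Nat.id by apply mfloor_nonneg. reflexivity. Qed.

Lemma mfloor_1 : mfloor 1 = 0%Z.
Proof.
  apply floor_eq. rewrite beta_alpha. pose proof alpha_bounds. simpl. lra.
Qed.

Lemma mfloor_2 : mfloor 2 = 1%Z.
Proof.
  apply floor_eq. rewrite beta_alpha. pose proof alpha_bounds. simpl. lra.
Qed.

(* The image of the letter s_(j+1) starts right after position [block_end j]. *)
Definition block_end (j : nat) : nat := (2 * j + Z.to_nat (mfloor (S j)))%nat.

Lemma block_position j k :
  INR (block_end j + 1 + k) * alpha + beta =
  INR (S j) + (INR k - frac (INR (S j) * alpha + beta)) * alpha.
Proof.
  unfold block_end, frac. fold (mfloor (S j)).
  rewrite !plus_INR, mult_INR, INR_to_nat_mfloor, !S_INR, beta_alpha.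
  assert ((INR j + / 2) * (alpha * alpha - (1 - 2 * alpha)) = 0)
    by (rewrite alpha_sqr; ring).
  simpl. nra.
Qed.

Section Block.

Variable j : nat.

Let d := frac (INR (S j) * alpha + beta).

Lemma d_bounds : 0 < d < 1.
Proof. apply frac_bounds, mfloor_not_integer. Qed.

Lemma mfloor_block_start : mfloor (block_end j + 1) = Z.of_nat j.
Proof.
  rewrite <- (Nat.add_0_r (block_end j + 1)).
  apply floor_eq. rewrite block_position. fold d.
  rewrite <- INR_IZR_INZ, S_INR. pose proof d_bounds. pose proof alpha_bounds.
  simpl. nra.
Qed.

Lemma mfloor_block_inside k : 0 <= (INR k - d) * alpha < 1 ->
  mfloor (block_end j + 1 + k) = Z.of_nat (S j).
Proof.
  intro H. apply floor_eq. rewrite block_position. fold d.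
  rewrite <- INR_IZR_INZ. lra.
Qed.

Lemma mfloor_block_middle k : (1 <= k <= 2)%nat ->
  mfloor (block_end j + 1 + k) = Z.of_nat (S j).
Proof.
  intros [H1 H2]. apply le_INR in H1, H2. simpl in H1, H2.
  apply mfloor_block_inside. pose proof d_bounds. pose proof alpha_bounds. nra.
Qed.

(* Here d > 1 - alpha, and (3 - d) alpha < (2 + alpha) alpha = 1 is exactly
   the relation alpha^2 + 2 alpha = 1. *)
Lemma mfloor_block_last : mfloor (S (S j)) = (mfloor (S j) + 1)%Z ->
  mfloor (block_end j + 1 + 3) = Z.of_nat (S j).
Proof.
  intro H. apply mfloor_block_inside.
  assert (1 - alpha < d).
  { unfold d, frac. fold (mfloor (S j)).
    destruct (floor_bounds (INR (S (S j)) * alpha + beta)) as [H1 _].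
    fold (mfloor (S (S j))) in H1. rewrite H, plus_IZR in H1.
    pose proof (mfloor_not_integer (S (S j)) (mfloor (S j) + 1)) as Hne.
    rewrite plus_IZR, S_INR in Hne. rewrite S_INR in H1. lra. }
  pose proof d_bounds. pose proof alpha_bounds. pose proof alpha_sqr.
  simpl. nra.
Qed.

End Block.

Definition letter (n : nat) : nat := Z.to_nat (St alpha beta n).

Lemma St_alpha_beta_01 n : St alpha beta n = 0%Z \/ St alpha beta n = 1%Z.
Proof. apply St_01. pose proof alpha_bounds. lra. Qed.

Lemma letter_St n : Z.of_nat (letter n) = St alpha beta n.
Proof.
  unfold letter. rewrite Z2Nat.id; [reflexivity |].
  destruct (St_alpha_beta_01 n) as [-> | ->]; lia.
Qed.

Lemma letter_le_1 n : (letter n <= 1)%nat.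
Proof.
  enough (Z.of_nat (letter n) <= 1)%Z by lia. rewrite letter_St.
  destruct (St_alpha_beta_01 n) as [-> | ->]; lia.
Qed.

Lemma mfloor_succ n : mfloor (S n) = (mfloor n + Z.of_nat (letter n))%Z.
Proof. rewrite letter_St. unfold St. fold (mfloor (S n)) (mfloor n). lia. Qed.

Lemma letter_of_mfloor n e : mfloor (S n) = (mfloor n + Z.of_nat e)%Z -> letter n = e.
Proof. rewrite mfloor_succ. lia. Qed.

Lemma block_end_succ j : block_end (S j) = (block_end j + 2 + letter (S j))%nat.
Proof.
  unfold block_end. rewrite (mfloor_succ (S j)).
  pose proof (mfloor_nonneg (S j)). lia.
Qed.

Lemma letter_block j :
  map letter (seq (S (block_end j)) (block_end (S j) - block_end j)) =
  psi_letter (letter (S j)).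
Proof.
  pose proof (mfloor_succ (S j)) as Hup. pose proof (letter_le_1 (S j)).
  replace (block_end (S j) - block_end j)%nat with (2 + letter (S j))%nat
    by (rewrite block_end_succ; lia).
  pose proof (mfloor_block_start j) as F0.
  pose proof (mfloor_block_middle j 1) as F1.
  pose proof (mfloor_block_middle j 2) as F2.
  pose proof (mfloor_block_last j) as F3.
  set (b := block_end j) in *.
  assert (L1 : letter (S b) = 1%nat).
  { apply letter_of_mfloor.
    replace (S (S b)) with (b + 1 + 1)%nat by lia. replace (S b) with (b + 1)%nat by lia.
    rewrite F0, F1 by lia. lia. }
  assert (L2 : letter (S (S b)) = 0%nat).
  { apply letter_of_mfloor.
    replace (S (S (S b))) with (b + 1 + 2)%nat by lia. replace (S (S b)) with (b + 1 + 1)%nat by lia.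
    rewrite F1, F2 by lia. lia. }
  destruct (letter (S j)) as [| [| e]] eqn:Hl; [| | lia].
  - cbn [seq map Nat.add psi_letter]. now rewrite L1, L2.
  - assert (L3 : letter (S (S (S b))) = 0%nat).
    { apply letter_of_mfloor.
      replace (S (S (S (S b)))) with (b + 1 + 3)%nat by lia.
      replace (S (S (S b))) with (b + 1 + 2)%nat by lia.
      rewrite F2, F3 by lia. lia. }
    cbn [seq map Nat.add psi_letter]. now rewrite L1, L2, L3.
Qed.

Definition prefix (L : nat) : list nat := map letter (seq 1 L).

Lemma nth_prefix i L : (i < L)%nat -> nth i (prefix L) 0%nat = letter (S i).
Proof.
  intro H. unfold prefix.
  rewrite (nth_indep _ 0%nat (letter 0)) by (rewrite length_map, length_seq; lia).
  now rewrite map_nth, seq_nth.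
Qed.

Lemma psi_app u v : psi (u ++ v) = psi u ++ psi v.
Proof. apply flat_map_app. Qed.

Lemma psi_prefix L : psi (prefix L) = prefix (block_end L).
Proof.
  induction L as [| L IH].
  - unfold block_end. now rewrite mfloor_1.
  - unfold prefix. rewrite seq_S, map_app, psi_app. fold (prefix L). rewrite IH.
    replace (block_end (S L)) with (block_end L + (block_end (S L) - block_end L))%nat
      by (rewrite block_end_succ; lia).
    unfold prefix. rewrite seq_app, map_app, letter_block.
    cbn [map psi flat_map]. now rewrite app_nil_r.
Qed.

Lemma psi_iter_prefix k : psi_iter k = prefix (Nat.iter k block_end 1%nat).
Proof.
  induction k as [| k IH].
  - cbn. replace (letter 1) with 1%nat; [reflexivity |].
    symmetry. apply letter_of_mfloor. now rewrite mfloor_1, mfloor_2.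
  - change (psi_iter (S k)) with (psi (psi_iter k)).
    rewrite IH, psi_prefix. reflexivity.
Qed.

Lemma iter_block_end_ge k : (S k <= Nat.iter k block_end 1%nat)%nat.
Proof.
  induction k as [| k IH]; [reflexivity |].
  change (Nat.iter (S k) block_end 1%nat) with (block_end (Nat.iter k block_end 1%nat)).
  unfold block_end at 1. lia.
Qed.

Theorem lemma2 : forall n : nat, (1 <= n)%nat ->
  Z.of_nat (w n) = St (sqrt 2 - 1) (1 - / 2 * sqrt 2) n.
Proof.
  intros n Hn. unfold w. rewrite psi_iter_prefix, nth_prefix.
  - replace (S (n - 1)) with n by lia. apply letter_St.
  - pose proof (iter_block_end_ge n). lia.
Qed.
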